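(* Let $W\in\mathcal N$ with $\langle W,W\rangle=1$ and $W\notin\mathcal Z$, let $E_3=W\times E_2$, $w=\sqrt{\langle W,W\rangle_W}$, and let $f_1,f_2,f_3$ be the numbers $f_1=\langle [E_3,E_1],W\rangle_W$, $f_2=\tfrac12\big(\langle[E_3,W],E_2\rangle_W+\langle[E_3,E_2],W\rangle_W-\langle[E_3,W],W\rangle_W\langle X_0,E_2\rangle\big)$, $f_3=\tfrac12\big(\langle[E_3,W],E_2\rangle_W+\langle[E_2,E_3],W\rangle_W-\langle[E_3,W],W\rangle_W\langle X_0,E_2\rangle\big)$. Put $f_4=-\frac{f_1}{w}-f_2\langle X_0,E_2\rangle+\frac{3w}{4}\langle X_0,E_2\rangle$ and $f_5=\langle [E_2,E_3],E_2\rangle_W-\frac32 f_3\langle X_0,E_2\rangle$. Then the Chern–Rund connection $\nabla^W$ satisfies $$\nabla^W_{E_1}E_1=\frac{f_1}{w}E_3,\quad \nabla^W_{E_1}E_2=\nabla^W_{E_2}E_1=\frac{f_2}{w}E_3,\quad \nabla^W_{E_2}E_2=f_4E_3,$$ $$\nabla^W_{E_3}E_1=\nabla^W_{E_1}E_3+[E_3,E_1]=\frac{f_3}{w}E_2,$$ $$\nabla^W_{E_2}E_3=\nabla^W_{E_3}E_2+[E_2,E_3]=-\frac{f_2}{w}E_1+f_5E_2,$$ $$\nabla^W_{E_3}E_3=-\frac{f_3}{2}\langle X_0,E_2\rangle E_3.$$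
   Context: Let $\mathcal N$ be the 3-dimensional real Heisenberg Lie algebra with basis $(X,Y,Z)$ whose only nonzero brackets are $[X,Y]=-[Y,X]=Z$. Let $\langle\cdot,\cdot\rangle$ be the inner product on $\mathcal N$ for which $(X,Y,Z)$ is orthonormal, and $\mathcal Z=\operatorname{span}(Z)$ the center. Let $\times$ denote the cross product on $\mathcal N$ with respect to $\langle\cdot,\cdot\rangle$ and the orientation with $X\times Y=Z$. Fix $0<\xi<1$, put $X_0=\xi Z$, and consider the Randers Minkowski functional $f(U)=\sqrt{\langle U,U\rangle}+\langle X_0,U\rangle$ on $\mathcal N$ (extended by left translations to a left invariant Randers metric on the Heisenberg group). For nonzero $W\in\mathcal N$ define the osculating inner product $\langle U,V\rangle_W=\frac12\frac{\partial^2}{\partial s\,\partial t}f^2(W+sU+tV)\big|_{s=t=0}$ and the Cartan tensor $\mathcal C_W(U,V,T)=\frac14\frac{\partial^3}{\partial r\,\partial s\,\partial t}f^2(W+rU+sV+tT)\big|_{r=s=t=0}$. Define $\mathcal C^2_W(U,V)\in\mathcal N$ by requiring $\langle \mathcal C^2_W(U,V),T\rangle_W=\mathcal C_W(U,V,T)$ for all $T$. The Cartan vector $C_W$ is the unique vector with $\langle S,C_W\rangle_W=\operatorname{trace}\big(U\mapsto \mathcal C^2_W(S,U)\big)$ for all $S\in\mathcal N$; it is nonzero when $W\notin\mathcal Z$. Berwald–Moór frame vectors: $E_1=W/\sqrt{\langle W,W\rangle_W}$ and $E_2=C_W/\sqrt{\langle C_W,C_W\rangle_W}$. The (left invariant)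 Chern–Rund connection with reference vector $W$ is the bilinear map $\nabla^W:\mathcal N\times\mathcal N\to\mathcal N$ determined by: for all $U,V,T\in\mathcal N$, $$2\langle\nabla^W_UV,T\rangle_W=\langle[U,V],T\rangle_W-\langle[V,T],U\rangle_W+\langle[T,U],V\rangle_W-2\mathcal C_W(\nabla^W_UW,V,T)-2\mathcal C_W(\nabla^W_VW,T,U)+2\mathcal C_W(\nabla^W_TW,U,V).$$ *)

From Stdlib Require Import Reals Lra ClassicalEpsilon.
Open Scope R_scope.

(** Vectors of the Heisenberg algebra N, in coordinates w.r.t. the basis (X,Y,Z). *)
Record vec := mkV { vx : R ; vy : R ; vz : R }.

Definition vadd (U V : vec) : vec := mkV (vx U + vx V) (vy U + vy V) (vz U + vz V).
Definition vscal (c : R) (U : vec) : vec := mkV (c * vx U) (c * vy U) (c * vz U).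
Definition vopp (U : vec) : vec := vscal (-1) U.

Definition eX : vec := mkV 1 0 0.
Definition eY : vec := mkV 0 1 0.
Definition eZ : vec := mkV 0 0 1.

Definition bracket (U V : vec) : vec := mkV 0 0 (vx U * vy V - vy U * vx V).

Definition dot (U V : vec) : R := vx U * vx V + vy U * vy V + vz U * vz V.

Definition cross (U V : vec) : vec :=
  mkV (vy U * vz V - vz U * vy V) (vz U * vx V - vx U * vz V) (vx U * vy V - vy U * vx V).

Definition X0 (xi : R) : vec := vscal xi eZ.
Definition randers (xi : R) (U : vec) : R := sqrt (dot U U) + dot (X0 xi) U.
Definition F2 (xi : R) (U : vec) : R := (randers xi U) ^ 2.

(** Iterated partial derivatives at the origin:
    has_d2 F a : a = d/ds (d/dt F s t |_{t=0}) |_{s=0}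
    has_d3 F a : a = d/dr (d/ds (d/dt F r s t |_{t=0}) |_{s=0}) |_{r=0}  *)
Definition has_d2 (F : R -> R -> R) (a : R) : Prop :=
  exists (G : R -> R) (d : R), 0 < d /\
    (forall s, Rabs s < d -> derivable_pt_lim (fun t => F s t) 0 (G s)) /\
    derivable_pt_lim G 0 a.

Definition has_d3 (F : R -> R -> R -> R) (a : R) : Prop :=
  exists (H : R -> R -> R) (G : R -> R) (d : R), 0 < d /\
    (forall r s, Rabs r < d -> Rabs s < d ->
        derivable_pt_lim (fun t => F r s t) 0 (H r s)) /\
    (forall r, Rabs r < d -> derivable_pt_lim (fun s => H r s) 0 (G r)) /\
    derivable_pt_lim G 0 a.

Definition inhR : inhabited R := inhabits 0.
Definition inhV : inhabited vec := inhabits (mkV 0 0 0).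

(** Osculating inner product <U,V>_W = 1/2 d^2/dsdt f^2(W+sU+tV) at 0. *)
Definition oip (xi : R) (W U V : vec) : R :=
  epsilon inhR (fun a => exists d,
    has_d2 (fun s t => F2 xi (vadd W (vadd (vscal s U) (vscal t V)))) d /\ a = d / 2).

(** Cartan tensor C_W(U,V,T) = 1/4 d^3/drdsdt f^2(W+rU+sV+tT) at 0. *)
Definition cartan (xi : R) (W U V T : vec) : R :=
  epsilon inhR (fun a => exists d,
    has_d3 (fun r s t =>
      F2 xi (vadd W (vadd (vscal r U) (vadd (vscal s V) (vscal t T))))) d /\ a = d / 4).

Definition C2 (xi : R) (W U V : vec) : vec :=
  epsilon inhV (fun X => forall T, oip xi W X T = cartan xi W U V T).

Definition trace (L : vec -> vec) : R := vx (L eX) + vy (L eY) + vz (L eZ).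

Definition cartan_vec (xi : R) (W : vec) : vec :=
  epsilon inhV (fun C => forall S, oip xi W S C = trace (fun U => C2 xi W S U)).

Definition BM_E1 (xi : R) (W : vec) : vec := vscal (/ sqrt (oip xi W W W)) W.
Definition BM_E2 (xi : R) (W : vec) : vec :=
  let C := cartan_vec xi W in vscal (/ sqrt (oip xi W C C)) C.
Definition BM_E3 (xi : R) (W : vec) : vec := cross W (BM_E2 xi W).

Definition bilinear (B : vec -> vec -> vec) : Prop :=
  (forall U U' V, B (vadd U U') V = vadd (B U V) (B U' V)) /\
  (forall c U V, B (vscal c U) V = vscal c (B U V)) /\
  (forall U V V', B U (vadd V V') = vadd (B U V) (B U V')) /\
  (forall c U V, B U (vscal c V) = vscal c (B U V)).

Definition chern_rund_eq (xi : R) (W : vec) (nab : vec -> vec -> vec) : Prop :=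
  forall U V T,
    2 * oip xi W (nab U V) T =
      oip xi W (bracket U V) T - oip xi W (bracket V T) U + oip xi W (bracket T U) V
      - 2 * cartan xi W (nab U W) V T - 2 * cartan xi W (nab V W) T U
      + 2 * cartan xi W (nab T W) U V.

Definition wnum (xi : R) (W : vec) : R := sqrt (oip xi W W W).

Definition f1 (xi : R) (W : vec) : R :=
  oip xi W (bracket (BM_E3 xi W) (BM_E1 xi W)) W.

Definition f2 (xi : R) (W : vec) : R :=
  (oip xi W (bracket (BM_E3 xi W) W) (BM_E2 xi W) + oip xi W (bracket (BM_E3 xi W) (BM_E2 xi W)) W
   - oip xi W (bracket (BM_E3 xi W) W) W * dot (X0 xi) (BM_E2 xi W)) / 2.

Definition f3 (xi : R) (W : vec) : R :=
  (oip xi W (bracket (BM_E3 xi W) W) (BM_E2 xi W) + oip xi W (bracket (BM_E2 xi W) (BM_E3 xi W)) W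
   - oip xi W (bracket (BM_E3 xi W) W) W * dot (X0 xi) (BM_E2 xi W)) / 2.

Definition f4 (xi : R) (W : vec) : R :=
  - (f1 xi W / wnum xi W) - f2 xi W * dot (X0 xi) (BM_E2 xi W)
  + 3 * wnum xi W / 4 * dot (X0 xi) (BM_E2 xi W).

Definition f5 (xi : R) (W : vec) : R :=
  oip xi W (bracket (BM_E2 xi W) (BM_E3 xi W)) (BM_E2 xi W)
  - 3 / 2 * f3 xi W * dot (X0 xi) (BM_E2 xi W).

(** Fix a unit vector W (for the Euclidean product) outside the centre.  The
   proof is a computation in the frame (W, Z, P) of N, where P = W x Z is
   nonzero because W is not central.

   Differentiating f^2 = (|U| + xi U_z)^2 along lines gives
      explicit values [osc] and [cart] for the osculating inner product and
      the Cartan tensor at W; since iterated derivatives are unique, the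
      choice operators in [oip] and [cartan] return exactly these values.
   2. Frame coordinates.  In the coordinates of (W, Z, P) the osculating
      product, Cartan tensor, bracket and cross product become rational
      expressions in xi and c = W_z (the [..F] functions); the osculating
      product is nondegenerate, so a vector is determined by its pairings.
   3. Frame data.  Testing the defining identity against frame vectors fixes
      first nabla_W W, then nabla_U W and finally nabla_U V (the Cartan
      tensor vanishes as soon as W fills one of its slots).  Hence
      nabla_{E_i} E_j is the unique solution r of a Koszul-type equation in
      coordinates, which is checked for each claimed value by field
      arithmetic. *)

From Stdlib Require Import Reals Lra ClassicalEpsilon.
From Coquelicot Require Import Coquelicot.
Open Scope R_scope.

Lemma vec_eq (U V : vec) : vx U = vx V -> vy U = vy V -> vz U = vz V -> U = V.
Proof. destruct U, V; simpl; intros; subst; reflexivity. Qed.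

(** Cauchy–Schwarz: a perturbation of a unit vector by a vector of squared
    length below 1/4 stays away from 0. *)
Lemma unit_perturb_pos W Z : dot W W = 1 -> dot Z Z < 1/4 -> 0 < dot (vadd W Z) (vadd W Z).
Proof.
  intros HW HZ. destruct W as [a b c], Z as [x y z]; unfold dot, vadd in *; simpl in *.
  assert (CS : (a*x + b*y + c*z)^2 <= x*x + y*y + z*z).
  { replace (x*x + y*y + z*z) with ((a*a + b*b + c*c) * (x*x + y*y + z*z)) by (rewrite HW; ring).
    assert (L : (a*a + b*b + c*c) * (x*x + y*y + z*z) - (a*x + b*y + c*z)^2
      = (a*y - b*x)^2 + (b*z - c*y)^2 + (c*x - a*z)^2) by ring.
    assert (0 <= (a*y - b*x)^2 + (b*z - c*y)^2 + (c*x - a*z)^2)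
      by (apply Rplus_le_le_0_compat; [apply Rplus_le_le_0_compat|]; apply pow2_ge_0).
    lra. }
  nra.
Qed.

Lemma small_lines U V : exists d, 0 < d /\ forall r s, Rabs r < d -> Rabs s < d ->
  dot (vadd (vscal r U) (vscal s V)) (vadd (vscal r U) (vscal s V)) < 1/4.
Proof.
  set (M := 1 + dot U U + dot V V).
  assert (HU : 0 <= dot U U) by (unfold dot; nra).
  assert (HV : 0 <= dot V V) by (unfold dot; nra).
  assert (HM : 1 <= M) by (unfold M; lra).
  exists (/ (4 * M)). split; [apply Rinv_0_lt_compat; lra|].
  intros r s Hr Hs.
  assert (Hd : / (4 * M) * (4 * M) = 1) by (field; lra).
  assert (Hd0 : 0 < / (4 * M)) by (apply Rinv_0_lt_compat; lra).
  apply Rabs_def2 in Hr; apply Rabs_def2 in Hs.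
  set (d := / (4 * M)) in *.
  assert (Hr2 : r * r <= d * d) by nra.
  assert (Hs2 : s * s <= d * d) by nra.
  assert (Hdd : d * d * M <= 1/16).
  { replace (d * d * M) with (d * (d * (4 * M)) / 4) by field. rewrite Hd.
    assert (d <= 1/4) by (apply Rmult_le_reg_r with (4 * M); nra). nra. }
  assert (Hsplit : dot (vadd (vscal r U) (vscal s V)) (vadd (vscal r U) (vscal s V))
     <= 2 * (r * r) * dot U U + 2 * (s * s) * dot V V).
  { destruct U as [u1 u2 u3], V as [v1 v2 v3]; unfold dot, vadd, vscal; simpl.
    assert (0 <= (r*u1 - s*v1)^2 + (r*u2 - s*v2)^2 + (r*u3 - s*v3)^2)
      by (apply Rplus_le_le_0_compat; [apply Rplus_le_le_0_compat|]; apply pow2_ge_0).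
    nra. }
  assert (2 * (r * r) * dot U U + 2 * (s * s) * dot V V <= 2 * (d * d) * M).
  { unfold M. nra. }
  lra.
Qed.

(** Near a unit vector W, all points W + rU + sV are nonzero; there f^2 is
    smooth, which is what the derivative computations below require. *)
Lemma near_unit_pos W U V : dot W W = 1 -> exists d, 0 < d /\
  forall r s, Rabs r < d -> Rabs s < d ->
  0 < dot (vadd W (vadd (vscal r U) (vscal s V))) (vadd W (vadd (vscal r U) (vscal s V))).
Proof.
  intros HW. destruct (small_lines U V) as [d [Hd Hsmall]].
  exists d. split; [exact Hd|]. intros r s Hr Hs. apply unit_perturb_pos; auto.
Qed.

Definition F2_slope (xi : R) (Y V : vec) : R :=
  2 * (sqrt (dot Y Y) + xi * vz Y) * (dot Y V / sqrt (dot Y Y) + xi * vz V).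

Definition osc_at (xi : R) (Y U V : vec) : R :=
  let a := sqrt (dot Y Y) in
  (dot Y U / a + xi * vz U) * (dot Y V / a + xi * vz V) +
  (a + xi * vz Y) * (dot U V / a - dot Y U * dot Y V / (a * a * a)).

Definition osc_at_slope (xi : R) (Y U V T : vec) : R :=
  let a := sqrt (dot Y Y) in
  let h := fun P Q => dot P Q - dot Y P * dot Y Q / (a * a) in
  let m := fun P => xi * vz P - xi * vz Y * dot Y P / (a * a) in
  (h U V * m T + h V T * m U + h T U * m V) / a.

Lemma F2_deriv xi Y V : 0 < dot Y Y ->
  is_derive (fun t => F2 xi (vadd Y (vscal t V))) 0 (F2_slope xi Y V).
Proof.
  intros HY. destruct Y as [y1 y2 y3], V as [v1 v2 v3].
  unfold F2, randers, F2_slope, dot, vadd, vscal, X0, eZ in *; simpl in *.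
  assert (sqrt (y1 * y1 + y2 * y2 + y3 * y3) <> 0) by (apply Rgt_not_eq, sqrt_lt_R0; lra).
  auto_derive; rewrite ?Rmult_0_l, ?Rplus_0_r; [tauto|]. field; auto.
Qed.

Lemma F2_slope_deriv xi Y U V : 0 < dot Y Y ->
  is_derive (fun s => F2_slope xi (vadd Y (vscal s U)) V) 0 (2 * osc_at xi Y U V).
Proof.
  intros HY. destruct Y as [y1 y2 y3], U as [u1 u2 u3], V as [v1 v2 v3].
  unfold osc_at, F2_slope, dot, vadd, vscal in *; simpl in *.
  assert (sqrt (y1 * y1 + y2 * y2 + y3 * y3) <> 0) by (apply Rgt_not_eq, sqrt_lt_R0; lra).
  auto_derive; rewrite ?Rmult_0_l, ?Rplus_0_r; [tauto|]. field; auto.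
Qed.

Lemma osc_at_deriv xi Y U V T : 0 < dot Y Y ->
  is_derive (fun r => osc_at xi (vadd Y (vscal r U)) V T) 0 (osc_at_slope xi Y U V T).
Proof.
  intros HY. destruct Y as [y1 y2 y3], U as [u1 u2 u3], V as [v1 v2 v3], T as [t1 t2 t3].
  unfold osc_at_slope, osc_at, dot, vadd, vscal in *; simpl in *.
  assert (sqrt (y1 * y1 + y2 * y2 + y3 * y3) <> 0) by (apply Rgt_not_eq, sqrt_lt_R0; lra).
  auto_derive; rewrite ?Rmult_0_l, ?Rplus_0_r.
  - repeat split; try assumption;
      repeat (apply Rmult_integral_contrapositive_currified; try assumption).
  - field; auto.
Qed.

Lemma derive_unique_near (f g : R -> R) d l1 l2 : 0 < d ->
  (forall s, Rabs s < d -> f s = g s) ->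
  derivable_pt_lim f 0 l1 -> derivable_pt_lim g 0 l2 -> l1 = l2.
Proof.
  intros Hd Hfg H1 H2. apply is_derive_Reals in H1. apply is_derive_Reals in H2.
  assert (H3 : is_derive g 0 l1).
  { apply (is_derive_ext_loc f g 0 l1); [|exact H1].
    exists (mkposreal d Hd). intros s Hs. apply Hfg.
    change (Rabs (s - 0) < d) in Hs. rewrite Rminus_0_r in Hs. exact Hs. }
  apply is_derive_unique in H2. apply is_derive_unique in H3. congruence.
Qed.

Lemma has_d2_unique F a1 a2 : has_d2 F a1 -> has_d2 F a2 -> a1 = a2.
Proof.
  intros [G1 [d1 [Hd1 [HG1 HG1']]]] [G2 [d2 [Hd2 [HG2 HG2']]]].
  apply (derive_unique_near G1 G2 (Rmin d1 d2)); auto.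
  - apply Rmin_pos; auto.
  - intros s Hs. apply (uniqueness_limite (fun t => F s t) 0).
    + apply HG1. apply Rlt_le_trans with (1 := Hs). apply Rmin_l.
    + apply HG2. apply Rlt_le_trans with (1 := Hs). apply Rmin_r.
Qed.

Lemma has_d3_unique F a1 a2 : has_d3 F a1 -> has_d3 F a2 -> a1 = a2.
Proof.
  intros [H1 [G1 [d1 [Hd1 [HH1 [HG1 HG1']]]]]] [H2 [G2 [d2 [Hd2 [HH2 [HG2 HG2']]]]]].
  assert (Hm : 0 < Rmin d1 d2) by (apply Rmin_pos; auto).
  assert (L1 : forall x, Rabs x < Rmin d1 d2 -> Rabs x < d1)
    by (intros x Hx; apply Rlt_le_trans with (1 := Hx); apply Rmin_l).
  assert (L2 : forall x, Rabs x < Rmin d1 d2 -> Rabs x < d2)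
    by (intros x Hx; apply Rlt_le_trans with (1 := Hx); apply Rmin_r).
  apply (derive_unique_near G1 G2 (Rmin d1 d2)); auto.
  intros r Hr.
  apply (derive_unique_near (fun s => H1 r s) (fun s => H2 r s) (Rmin d1 d2)); auto.
  intros s Hs. apply (uniqueness_limite (fun t => F r s t) 0); auto.
Qed.

Lemma has_d2_F2 xi W U V : dot W W = 1 ->
  has_d2 (fun s t => F2 xi (vadd W (vadd (vscal s U) (vscal t V)))) (2 * osc_at xi W U V).
Proof.
  intros HW. destruct (near_unit_pos W U U HW) as [d [Hd Hpos]].
  exists (fun s => F2_slope xi (vadd W (vscal s U)) V), d.
  split; [exact Hd|split].
  - intros s Hs. apply is_derive_Reals.
    apply (is_derive_ext (fun t => F2 xi (vadd (vadd W (vscal s U)) (vscal t V)))).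
    + intros t. f_equal. apply vec_eq; simpl; ring.
    + apply F2_deriv.
      replace (vadd W (vscal s U)) with (vadd W (vadd (vscal s U) (vscal 0 U)))
        by (apply vec_eq; simpl; ring).
      apply Hpos; rewrite ?Rabs_R0; auto.
  - apply is_derive_Reals, F2_slope_deriv. rewrite HW; lra.
Qed.

Lemma has_d3_F2 xi W U V T : dot W W = 1 ->
  has_d3 (fun r s t => F2 xi (vadd W (vadd (vscal r U) (vadd (vscal s V) (vscal t T)))))
    (2 * osc_at_slope xi W U V T).
Proof.
  intros HW. destruct (near_unit_pos W U V HW) as [d [Hd Hpos]].
  exists (fun r s => F2_slope xi (vadd (vadd W (vscal r U)) (vscal s V)) T),
    (fun r => 2 * osc_at xi (vadd W (vscal r U)) V T), d.
  split; [exact Hd|split; [|split]].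
  - intros r s Hr Hs. apply is_derive_Reals.
    apply (is_derive_ext
      (fun t => F2 xi (vadd (vadd (vadd W (vscal r U)) (vscal s V)) (vscal t T)))).
    + intros t. f_equal. apply vec_eq; simpl; ring.
    + apply F2_deriv.
      replace (vadd (vadd W (vscal r U)) (vscal s V))
        with (vadd W (vadd (vscal r U) (vscal s V))) by (apply vec_eq; simpl; ring).
      apply Hpos; auto.
  - intros r Hr. apply is_derive_Reals, F2_slope_deriv.
    replace (vadd W (vscal r U)) with (vadd W (vadd (vscal r U) (vscal 0 V)))
      by (apply vec_eq; simpl; ring).
    apply Hpos; rewrite ?Rabs_R0; auto.
  - apply is_derive_Reals, is_derive_scal, osc_at_deriv. rewrite HW; lra.
Qed.

Lemma epsilon_eq {A : Type} (i : inhabited A) (P : A -> Prop) (a : A) :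
  P a -> (forall b, P b -> b = a) -> epsilon i P = a.
Proof. intros Ha Huniq. apply Huniq, epsilon_spec. exists a. exact Ha. Qed.

(** At a unit vector W: the angular form h_W, the 1-form m_W (the part of
    X0 orthogonal to W), and the closed forms of the osculating inner product
    and of the Cartan tensor C_W = (h m + h m + h m)/2 (note f(W) = 1 + xi W_z). *)
Definition hW (W X Y : vec) : R := dot X Y - dot W X * dot W Y.
Definition mW (xi : R) (W X : vec) : R := xi * vz X - xi * vz W * dot W X.
Definition osc (xi : R) (W X Y : vec) : R :=
  (dot W X + xi * vz X) * (dot W Y + xi * vz Y) + (1 + xi * vz W) * hW W X Y.
Definition cart (xi : R) (W X Y Z : vec) : R :=
  (hW W X Y * mW xi W Z + hW W Y Z * mW xi W X + hW W Z X * mW xi W Y) / 2.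

Lemma oip_unit xi W U V : dot W W = 1 -> oip xi W U V = osc xi W U V.
Proof.
  intros HW. unfold oip. apply epsilon_eq.
  - exists (2 * osc_at xi W U V). split; [apply has_d2_F2; exact HW|].
    unfold osc_at, osc, hW. rewrite HW, sqrt_1. field.
  - intros b [d [Hd ->]]. rewrite (has_d2_unique _ _ _ Hd (has_d2_F2 xi W U V HW)).
    unfold osc_at, osc, hW. rewrite HW, sqrt_1. field.
Qed.

Lemma cartan_unit xi W U V T : dot W W = 1 -> cartan xi W U V T = cart xi W U V T.
Proof.
  intros HW. unfold cartan. apply epsilon_eq.
  - exists (2 * osc_at_slope xi W U V T). split; [apply has_d3_F2; exact HW|].
    unfold osc_at_slope, cart, hW, mW. rewrite HW, sqrt_1. field.
  - intros b [d [Hd ->]]. rewrite (has_d3_unique _ _ _ Hd (has_d3_F2 xi W U V T HW)).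
    unfold osc_at_slope, cart, hW, mW. rewrite HW, sqrt_1. field.
Qed.

(** Coordinates (fW, fZ, fP) of the vector fW W + fZ Z + fP P, where
    P = W x Z = (W_y, -W_x, 0) (see [frame]). *)
Record fvec := FV { fW : R ; fZ : R ; fP : R }.

Definition frame (W : vec) (x : fvec) : vec :=
  mkV (fW x * vx W + fP x * vy W) (fW x * vy W - fP x * vx W) (fW x * vz W + fZ x).

Definition eW : fvec := FV 1 0 0.
Definition fadd (x y : fvec) : fvec := FV (fW x + fW y) (fZ x + fZ y) (fP x + fP y).
Definition fscal (k : R) (x : fvec) : fvec := FV (k * fW x) (k * fZ x) (k * fP x).

Lemma fvec_eq (x y : fvec) : fW x = fW y -> fZ x = fZ y -> fP x = fP y -> x = y.
Proof. destruct x, y; simpl; intros; subst; reflexivity. Qed.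

(** Coordinate expressions, with c = W_z.  [wF] is w = f(W), [rho] = |P|^2,
    [ellF] is the differential of f at W (with [kF] its value on Z), [gF] and [CF] are the osculating
    product and the Cartan tensor, [brF] and [crossF] the bracket and
    W x -.  [dualF a2 a3] is the vector whose [gF]-pairing is the 1-form
    t |-> a2 tZ + a3 tP; [C2F], [cvF] and [nabWF] turn out to be the
    coordinates of C^2_W, of the Cartan vector and of U |-> nabla_U W. *)
Section FrameFormulas.
Variables (xi c : R).

Definition wF : R := 1 + xi * c.
Definition kF : R := c + xi.
Definition rho : R := 1 - c * c.
Definition ellF (x : fvec) : R := wF * fW x + kF * fZ x.
Definition hF (x y : fvec) : R := rho * (fZ x * fZ y + fP x * fP y).
Definition mF (x : fvec) : R := xi * rho * fZ x.
Definition gF (x y : fvec) : R := ellF x * ellF y + wF * hF x y.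
Definition CF (x y z : fvec) : R := (hF x y * mF z + hF y z * mF x + hF z x * mF y) / 2.
Definition brF (x y : fvec) : fvec := FV 0 (- (fW x * fP y - fP x * fW y) * rho) 0.
Definition crossF (y : fvec) : fvec := FV (c * fP y) (- fP y) (fZ y).
Definition dualF (a2 a3 : R) : fvec :=
  FV (- kF * a2 / (wF * wF * rho)) (a2 / (wF * rho)) (a3 / (wF * rho)).
Definition C2F (s u : fvec) : fvec :=
  dualF ((hF s u * (xi * rho) + rho * fZ u * mF s + rho * fZ s * mF u) / 2)
        ((rho * fP u * mF s + rho * fP s * mF u) / 2).
Definition cvF : fvec := dualF (2 * xi * rho / wF) 0.
Definition nabWF (u : fvec) : fvec :=
  FV (- kF * fP u / 2) (wF * fP u / 2) (kF * fW u + wF * fZ u / 2).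

Hypothesis wF_nz : wF <> 0.
Hypothesis rho_nz : rho <> 0.

Lemma gF_dualF a2 a3 t : gF (dualF a2 a3) t = a2 * fZ t + a3 * fP t.
Proof. unfold gF, dualF, ellF, hF; simpl. field; auto. Qed.

Lemma gF_C2F s u t : gF (C2F s u) t = CF s u t.
Proof. unfold C2F. rewrite gF_dualF. unfold CF, hF, mF. field. Qed.

Lemma gF_cvF : gF cvF cvF = 4 * xi ^ 2 * rho / wF ^ 3.
Proof. unfold cvF at 1. rewrite gF_dualF. unfold cvF, dualF; simpl. field; auto. Qed.

Lemma CF_eW_mid x y : CF x eW y = 0.
Proof. unfold CF, hF, mF, eW; simpl. field. Qed.

Lemma CF_eW_last x y : CF x y eW = 0.
Proof. unfold CF, hF, mF, eW; simpl. field. Qed.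

End FrameFormulas.

Section AdaptedFrame.
Variables (xi : R) (W : vec).
Hypothesis HW : dot W W = 1.
Hypothesis HWZ : ~ (vx W = 0 /\ vy W = 0).
Local Notation c := (vz W).

Lemma horizontal_norm : vx W * vx W + vy W * vy W = rho c.
Proof. unfold dot in HW. unfold rho. lra. Qed.

Lemma rho_pos : 0 < rho c.
Proof.
  rewrite <- horizontal_norm.
  destruct (Req_dec (vx W) 0), (Req_dec (vy W) 0); [tauto | nra | nra | nra].
Qed.

Lemma wF_pos : 0 < xi < 1 -> 0 < wF xi c.
Proof.
  intros Hxi. pose proof rho_pos as Hr. unfold rho in Hr. unfold wF.
  assert (-1 < c) by nra. destruct (Rle_dec 0 c); nra.
Qed.

Lemma dotW_frame x : dot W (frame W x) = fW x + c * fZ x.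
Proof.
  transitivity (fW x * dot W W + c * fZ x); [unfold dot, frame; simpl; ring|].
  rewrite HW; ring.
Qed.

Lemma dot_frame x y : dot (frame W x) (frame W y) =
  fW x * fW y + c * (fW x * fZ y + fZ x * fW y) + fZ x * fZ y + rho c * fP x * fP y.
Proof.
  rewrite <- horizontal_norm.
  transitivity (fW x * fW y * dot W W + c * (fW x * fZ y + fZ x * fW y) + fZ x * fZ y
     + (vx W * vx W + vy W * vy W) * fP x * fP y); [unfold dot, frame; simpl; ring|].
  rewrite HW; ring.
Qed.

Lemma osc_frame x y : osc xi W (frame W x) (frame W y) = gF xi c x y.
Proof.
  unfold osc, hW. rewrite dot_frame, !dotW_frame. simpl.
  unfold gF, ellF, hF, wF, kF, rho. ring.
Qed.

Lemma cart_frame x y z :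
  cart xi W (frame W x) (frame W y) (frame W z) = CF xi c x y z.
Proof.
  unfold cart, mW, hW. rewrite !dot_frame, !dotW_frame. simpl.
  unfold CF, hF, mF, rho. field.
Qed.

Lemma frame_eW : frame W eW = W.
Proof. apply vec_eq; unfold frame, eW; simpl; ring. Qed.

Lemma osc_frame_W x : osc xi W (frame W x) W = gF xi c x eW.
Proof. rewrite <- osc_frame, frame_eW. reflexivity. Qed.

Lemma bracket_frame x y : bracket (frame W x) (frame W y) = frame W (brF c x y).
Proof.
  apply vec_eq; unfold frame, brF, bracket; simpl; try ring.
  rewrite <- horizontal_norm. ring.
Qed.

Lemma bracket_frame_W x : bracket (frame W x) W = frame W (brF c x eW).
Proof. rewrite <- bracket_frame, frame_eW. reflexivity. Qed.

Lemma cross_frame y : cross W (frame W y) = frame W (crossF c y).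
Proof.
  apply vec_eq; unfold frame, crossF, cross; simpl; try ring.
  replace (c * fP y * c + - fP y) with (- fP y * rho c) by (unfold rho; ring).
  rewrite <- horizontal_norm. ring.
Qed.

Lemma fadd_frame x y : vadd (frame W x) (frame W y) = frame W (fadd x y).
Proof. apply vec_eq; unfold frame, fadd; simpl; ring. Qed.

Lemma fscal_frame k x : vscal k (frame W x) = frame W (fscal k x).
Proof. apply vec_eq; unfold frame, fscal; simpl; ring. Qed.

Lemma X0_frame x : dot (X0 xi) (frame W x) = xi * (fW x * c + fZ x).
Proof. unfold dot, X0, eZ, frame; simpl; ring. Qed.

Definition frame_coords (X : vec) : fvec :=
  FV ((dot W X - c * vz X) / rho c) ((vz X - c * dot W X) / rho c)
     ((vy W * vx X - vx W * vy X) / rho c).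

Lemma frame_decomp X : X = frame W (frame_coords X).
Proof.
  pose proof rho_pos as Hr. pose proof horizontal_norm as Hh.
  destruct X as [x y z]. unfold frame, frame_coords, dot; simpl.
  apply vec_eq; simpl.
  - rewrite <- Hh in Hr |- *. field. lra.
  - rewrite <- Hh in Hr |- *. field. lra.
  - unfold rho in *. field. lra.
Qed.

Hypothesis Hxi : 0 < xi < 1.

Lemma gF_nondeg x y : (forall t, gF xi c x t = gF xi c y t) -> x = y.
Proof.
  intros H. pose proof rho_pos as Hr. pose proof (wF_pos Hxi) as Hw.
  assert (Hwr : 0 < wF xi c * rho c) by (apply Rmult_lt_0_compat; auto).
  pose proof (H (FV 1 0 0)) as H1. pose proof (H (FV 0 1 0)) as H2.
  pose proof (H (FV 0 0 1)) as H3.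
  unfold gF, ellF, hF in *; simpl in *.
  assert (EP : fP x = fP y) by (apply Rmult_eq_reg_l with (wF xi c * rho c); nra).
  assert (Eell : ellF xi c x = ellF xi c y)
    by (unfold ellF; apply Rmult_eq_reg_l with (wF xi c); nra).
  unfold ellF in Eell.
  assert (EZ : fZ x = fZ y)
    by (apply Rmult_eq_reg_l with (wF xi c * rho c); [rewrite Eell in H2; nra | lra]).
  apply fvec_eq; auto. rewrite EZ in Eell. apply Rmult_eq_reg_l with (wF xi c); lra.
Qed.

Lemma osc_nondeg X y : (forall t, osc xi W X (frame W t) = gF xi c y t) -> X = frame W y.
Proof.
  intros H. rewrite (frame_decomp X) in *. f_equal. apply gF_nondeg. intros t.
  rewrite <- H, osc_frame. reflexivity.
Qed.

End AdaptedFrame.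

Lemma osc_sym xi W X Y : osc xi W X Y = osc xi W Y X.
Proof. unfold osc, hW, dot. ring. Qed.

Lemma gF_sym xi c x y : gF xi c x y = gF xi c y x.
Proof. unfold gF, hF. ring. Qed.

Section CartanVector.
Variables (xi : R) (W : vec).
Hypothesis HW : dot W W = 1.
Hypothesis HWZ : ~ (vx W = 0 /\ vy W = 0).
Hypothesis Hxi : 0 < xi < 1.
Local Notation c := (vz W).

Let wF_nz : wF xi c <> 0 := Rgt_not_eq _ _ (wF_pos xi W HW HWZ Hxi).
Let rho_nz : rho c <> 0 := Rgt_not_eq _ _ (rho_pos W HW HWZ).

Lemma C2_frame s u : C2 xi W (frame W s) (frame W u) = frame W (C2F xi c s u).
Proof.
  unfold C2. apply epsilon_eq.
  - intros T. rewrite oip_unit, cartan_unit by exact HW.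
    rewrite (frame_decomp W HW HWZ T), osc_frame, cart_frame by exact HW.
    apply gF_C2F; assumption.
  - intros X HX. apply (osc_nondeg xi W HW HWZ Hxi). intros t.
    rewrite <- oip_unit, HX, cartan_unit, cart_frame by exact HW.
    symmetry. apply gF_C2F; assumption.
Qed.

Lemma trace_frame s : trace (fun U => C2 xi W (frame W s) U) = 2 * mF xi c s / wF xi c.
Proof.
  unfold trace. rewrite (frame_decomp W HW HWZ eX), (frame_decomp W HW HWZ eY),
    (frame_decomp W HW HWZ eZ), !C2_frame.
  pose proof (horizontal_norm W HW) as Hh. pose proof wF_nz as Hw. pose proof rho_nz as Hr.
  destruct W as [a b cc], s as [s1 s2 s3]. simpl in *.
  unfold frame_coords, C2F, dualF, frame, dot, hF, mF, rho, wF, kF in *; simpl.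
  field_simplify_eq; auto.
  replace (a ^ 2) with (1 - cc * cc - b ^ 2) by (rewrite <- Hh; ring). ring.
Qed.

Lemma cartan_vec_frame : cartan_vec xi W = frame W (cvF xi c).
Proof.
  unfold cartan_vec. apply epsilon_eq.
  - intros S. rewrite oip_unit by exact HW.
    rewrite (frame_decomp W HW HWZ S), osc_frame, trace_frame, gF_sym by exact HW.
    unfold cvF. rewrite gF_dualF by assumption. unfold mF. field. exact wF_nz.
  - intros C HC. apply (osc_nondeg xi W HW HWZ Hxi). intros t.
    rewrite osc_sym, <- oip_unit, HC, trace_frame by exact HW.
    unfold cvF. rewrite gF_dualF by assumption. unfold mF. field. exact wF_nz.
Qed.

End CartanVector.

(** The defining identity of the Chern–Rund connection in frame coordinates,
    with nabla_U W already replaced by [nabWF] (lemma [nab_W_frame]). *)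
Definition koszulF (xi c : R) (u v r : fvec) : Prop := forall t,
  2 * gF xi c r t =
    gF xi c (brF c u v) t - gF xi c (brF c v t) u + gF xi c (brF c t u) v
    - 2 * CF xi c (nabWF xi c u) v t - 2 * CF xi c (nabWF xi c v) t u
    + 2 * CF xi c (nabWF xi c t) u v.

Section Connection.
Variables (xi : R) (W : vec).
Hypothesis HW : dot W W = 1.
Hypothesis HWZ : ~ (vx W = 0 /\ vy W = 0).
Hypothesis Hxi : 0 < xi < 1.
Variable nab : vec -> vec -> vec.
Hypothesis Hnab : chern_rund_eq xi W nab.
Local Notation c := (vz W).

Let N (a b : fvec) : fvec := frame_coords W (nab (frame W a) (frame W b)).

Lemma chern_rund_frame u v t :
  2 * gF xi c (N u v) t =
    gF xi c (brF c u v) t - gF xi c (brF c v t) u + gF xi c (brF c t u) v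
    - 2 * CF xi c (N u eW) v t - 2 * CF xi c (N v eW) t u + 2 * CF xi c (N t eW) u v.
Proof.
  assert (HN : forall a b, nab (frame W a) (frame W b) = frame W (N a b))
    by (intros a b; apply frame_decomp; assumption).
  assert (HNW : forall a, nab (frame W a) W = frame W (N a eW))
    by (intros a; rewrite <- HN, frame_eW; reflexivity).
  pose proof (Hnab (frame W u) (frame W v) (frame W t)) as H.
  rewrite !oip_unit, !cartan_unit, !HNW, !HN, !bracket_frame, !osc_frame, !cart_frame in H
    by exact HW.
  lra.
Qed.

Let wF_nz : wF xi c <> 0 := Rgt_not_eq _ _ (wF_pos xi W HW HWZ Hxi).
Let rho_nz : rho c <> 0 := Rgt_not_eq _ _ (rho_pos W HW HWZ).

(** With U = V = W all Cartan terms vanish: nabla_W W is determined. *)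
Lemma nab_WW_frame : N eW eW = FV 0 0 (kF xi c).
Proof.
  apply (gF_nondeg xi W HW HWZ Hxi). intros t.
  pose proof (chern_rund_frame eW eW t) as H.
  rewrite !CF_eW_mid, CF_eW_last in H.
  assert (E : gF xi c (brF c eW eW) t - gF xi c (brF c eW t) eW + gF xi c (brF c t eW) eW
     = 2 * gF xi c (FV 0 0 (kF xi c)) t)
    by (unfold gF, brF, eW, ellF, hF, wF, kF, rho; simpl; ring).
  lra.
Qed.

(** With V = W only the Cartan term containing nabla_W W survives. *)
Lemma nab_W_frame u : N u eW = nabWF xi c u.
Proof.
  apply (gF_nondeg xi W HW HWZ Hxi). intros t.
  pose proof (chern_rund_frame u eW t) as H.
  rewrite CF_eW_mid, CF_eW_last, nab_WW_frame in H.
  assert (E : gF xi c (brF c u eW) t - gF xi c (brF c eW t) u + gF xi c (brF c t u) eW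
     - 2 * CF xi c (FV 0 0 (kF xi c)) t u = 2 * gF xi c (nabWF xi c u) t).
  { pose proof wF_nz; pose proof rho_nz.
    unfold CF, nabWF, gF, brF, eW, ellF, hF, mF in *; unfold wF, kF, rho in *; simpl.
    field; auto. }
  lra.
Qed.

Lemma nab_frame u v r : koszulF xi c u v r -> nab (frame W u) (frame W v) = frame W r.
Proof.
  intros Hk. rewrite (frame_decomp W HW HWZ (nab _ _)). f_equal.
  apply (gF_nondeg xi W HW HWZ Hxi). intros t.
  pose proof (chern_rund_frame u v t) as H. rewrite !nab_W_frame in H.
  pose proof (Hk t). fold (N u v). lra.
Qed.

End Connection.

(** The Berwald–Moór frame and the numbers f1, ..., f5 in coordinates, with
    q the normalising factor of the Cartan vector; q enters only through q^2. *)
Section FrameData.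
Variables (xi c q : R).

Definition e1F : fvec := FV (/ wF xi c) 0 0.
Definition e2F : fvec := fscal q (cvF xi c).
Definition e3F : fvec := crossF c e2F.
Definition X0e2F : R := xi * (fW e2F * c + fZ e2F).
Definition f1F : R := gF xi c (brF c e3F e1F) eW.
Definition f2F : R := (gF xi c (brF c e3F eW) e2F + gF xi c (brF c e3F e2F) eW
   - gF xi c (brF c e3F eW) eW * X0e2F) / 2.
Definition f3F : R := (gF xi c (brF c e3F eW) e2F + gF xi c (brF c e2F e3F) eW
   - gF xi c (brF c e3F eW) eW * X0e2F) / 2.
Definition f4F : R := - (f1F / wF xi c) - f2F * X0e2F + 3 * wF xi c / 4 * X0e2F.
Definition f5F : R := gF xi c (brF c e2F e3F) e2F - 3 / 2 * f3F * X0e2F.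

Hypothesis wF_nz : wF xi c <> 0.
Hypothesis rho_nz : rho c <> 0.
Hypothesis xi_nz : xi <> 0.
Hypothesis Hq : q ^ 2 = wF xi c ^ 3 / (4 * xi ^ 2 * rho c).

(** Expand a Koszul-type identity into a rational identity in xi, c, q and the
    test vector; reduce powers of q to q and q^2, then eliminate q^2. *)
Ltac koszul_check := intros [t1 t2 t3];
  unfold f4F, f5F, f1F, f2F, f3F, X0e2F, e1F, e2F, e3F, cvF, dualF, crossF, brF, fscal, fadd,
    eW, nabWF, CF, gF, ellF, hF, mF; simpl; unfold wF, kF, rho in *;
  field_simplify_eq;
  [ rewrite ?(ltac:(ring) : q ^ 3 = q * q ^ 2), ?(ltac:(ring) : q ^ 4 = q ^ 2 * q ^ 2),
      ?(ltac:(ring) : q ^ 5 = q * q ^ 2 * q ^ 2), ?(ltac:(ring) : q ^ 6 = q ^ 2 * q ^ 2 * q ^ 2),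
      ?Hq;
    field; auto
  | repeat split; auto ].

Lemma koszul_11 : koszulF xi c e1F e1F (fscal (f1F / wF xi c) e3F).
Proof. koszul_check. Qed.

Lemma koszul_12 : koszulF xi c e1F e2F (fscal (f2F / wF xi c) e3F).
Proof. koszul_check. Qed.

Lemma koszul_21 : koszulF xi c e2F e1F (fscal (f2F / wF xi c) e3F).
Proof. koszul_check. Qed.

Lemma koszul_22 : koszulF xi c e2F e2F (fscal f4F e3F).
Proof. koszul_check. Qed.

Lemma koszul_31 : koszulF xi c e3F e1F (fscal (f3F / wF xi c) e2F).
Proof. koszul_check. Qed.

Lemma koszul_13 :
  koszulF xi c e1F e3F (fadd (fscal (f3F / wF xi c) e2F) (fscal (-1) (brF c e3F e1F))).
Proof. koszul_check. Qed.

Lemma koszul_23 :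
  koszulF xi c e2F e3F (fadd (fscal (- (f2F / wF xi c)) e1F) (fscal f5F e2F)).
Proof. koszul_check. Qed.

Lemma koszul_32 : koszulF xi c e3F e2F
  (fadd (fadd (fscal (- (f2F / wF xi c)) e1F) (fscal f5F e2F)) (fscal (-1) (brF c e2F e3F))).
Proof. koszul_check. Qed.

Lemma koszul_33 : koszulF xi c e3F e3F (fscal (- (f3F / 2) * X0e2F) e3F).
Proof. koszul_check. Qed.

End FrameData.

Definition e2scale (xi c : R) : R := / sqrt (gF xi c (cvF xi c) (cvF xi c)).

Lemma e2scale_sq xi c : 0 < xi -> 0 < wF xi c -> 0 < rho c ->
  e2scale xi c ^ 2 = wF xi c ^ 3 / (4 * xi ^ 2 * rho c).
Proof.
  intros Hx Hw Hr. unfold e2scale. rewrite gF_cvF by lra.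
  assert (HG : 0 < 4 * xi ^ 2 * rho c / wF xi c ^ 3).
  { apply Rdiv_lt_0_compat; [|apply pow_lt; lra].
    apply Rmult_lt_0_compat; [|lra]. apply Rmult_lt_0_compat; [lra|apply pow_lt; lra]. }
  rewrite pow_inv, <- Rsqr_pow2, Rsqr_sqrt by lra.
  field. repeat split; try lra; apply pow_nonzero; lra.
Qed.

Section BerwaldMoorFrame.
Variables (xi : R) (W : vec).
Hypothesis HW : dot W W = 1.
Hypothesis HWZ : ~ (vx W = 0 /\ vy W = 0).
Hypothesis Hxi : 0 < xi < 1.
Local Notation c := (vz W).
Local Notation q := (e2scale xi (vz W)).

Lemma wnum_frame : wnum xi W = wF xi c.
Proof.
  unfold wnum. rewrite oip_unit by exact HW.
  replace (osc xi W W W) with (wF xi c * wF xi c) by (unfold osc, hW, wF; rewrite HW; ring).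
  apply sqrt_square. pose proof (wF_pos xi W HW HWZ Hxi). lra.
Qed.

Lemma BM_E1_frame : BM_E1 xi W = frame W (e1F xi c).
Proof.
  unfold BM_E1. fold (wnum xi W). rewrite wnum_frame.
  apply vec_eq; unfold frame, e1F; simpl; ring.
Qed.

Lemma BM_E2_frame : BM_E2 xi W = frame W (e2F xi c q).
Proof.
  unfold BM_E2. rewrite (cartan_vec_frame xi W HW HWZ Hxi), oip_unit, osc_frame, fscal_frame
    by exact HW.
  reflexivity.
Qed.

Lemma BM_E3_frame : BM_E3 xi W = frame W (e3F xi c q).
Proof. unfold BM_E3. rewrite BM_E2_frame, cross_frame by exact HW. reflexivity. Qed.

Lemma X0_E2 : dot (X0 xi) (BM_E2 xi W) = X0e2F xi c q.
Proof. rewrite BM_E2_frame, X0_frame. reflexivity. Qed.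

Lemma f1_frame : f1 xi W = f1F xi c q.
Proof.
  unfold f1. rewrite BM_E3_frame, BM_E1_frame, bracket_frame, oip_unit, osc_frame_W by exact HW.
  reflexivity.
Qed.

Lemma f2_frame : f2 xi W = f2F xi c q.
Proof.
  unfold f2. rewrite X0_E2, BM_E3_frame, BM_E2_frame, !bracket_frame_W, bracket_frame, !oip_unit,
    !osc_frame_W, osc_frame by exact HW.
  reflexivity.
Qed.

Lemma f3_frame : f3 xi W = f3F xi c q.
Proof.
  unfold f3. rewrite X0_E2, BM_E3_frame, BM_E2_frame, !bracket_frame_W, bracket_frame, !oip_unit,
    !osc_frame_W, osc_frame by exact HW.
  reflexivity.
Qed.

Lemma f4_frame : f4 xi W = f4F xi c q.
Proof. unfold f4. rewrite f1_frame, f2_frame, wnum_frame, X0_E2. reflexivity. Qed.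

Lemma f5_frame : f5 xi W = f5F xi c q.
Proof.
  unfold f5. rewrite f3_frame, X0_E2, BM_E3_frame, BM_E2_frame, bracket_frame, oip_unit, osc_frame
    by exact HW.
  reflexivity.
Qed.

End BerwaldMoorFrame.

Theorem mainTheorem12 (xi : R) (Hxi : 0 < xi < 1) (W : vec)
  (HW1 : dot W W = 1) (HWZ : ~ (vx W = 0 /\ vy W = 0))
  (nab : vec -> vec -> vec) (Hbil : bilinear nab) (Hnab : chern_rund_eq xi W nab) :
  let e1 := BM_E1 xi W in let e2 := BM_E2 xi W in let e3 := BM_E3 xi W in
  let w := wnum xi W in
  nab e1 e1 = vscal (f1 xi W / w) e3 /\
  nab e1 e2 = vscal (f2 xi W / w) e3 /\
  nab e2 e1 = vscal (f2 xi W / w) e3 /\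
  nab e2 e2 = vscal (f4 xi W) e3 /\
  nab e3 e1 = vscal (f3 xi W / w) e2 /\
  vadd (nab e1 e3) (bracket e3 e1) = vscal (f3 xi W / w) e2 /\
  nab e2 e3 = vadd (vscal (- (f2 xi W / w)) e1) (vscal (f5 xi W) e2) /\
  vadd (nab e3 e2) (bracket e2 e3) = vadd (vscal (- (f2 xi W / w)) e1) (vscal (f5 xi W) e2) /\
  nab e3 e3 = vscal (- (f3 xi W / 2) * dot (X0 xi) e2) e3.
Proof.
  intros e1 e2 e3 w. subst e1 e2 e3 w.
  rewrite (X0_E2 xi W HW1 HWZ Hxi), (f1_frame xi W HW1 HWZ Hxi), (f2_frame xi W HW1 HWZ Hxi),
    (f3_frame xi W HW1 HWZ Hxi), (f4_frame xi W HW1 HWZ Hxi), (f5_frame xi W HW1 HWZ Hxi),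
    (wnum_frame xi W HW1 HWZ Hxi), (BM_E1_frame xi W HW1 HWZ Hxi),
    (BM_E2_frame xi W HW1 HWZ Hxi), (BM_E3_frame xi W HW1 HWZ Hxi).
  rewrite !fscal_frame, !fadd_frame, !bracket_frame by exact HW1.
  set (c := vz W). set (q := e2scale xi c).
  assert (Hw : wF xi c <> 0) by exact (Rgt_not_eq _ _ (wF_pos xi W HW1 HWZ Hxi)).
  assert (Hr : rho c <> 0) by exact (Rgt_not_eq _ _ (rho_pos W HW1 HWZ)).
  assert (Hx : xi <> 0) by lra.
  assert (Hq : q ^ 2 = wF xi c ^ 3 / (4 * xi ^ 2 * rho c)).
  { apply e2scale_sq; [lra | exact (wF_pos xi W HW1 HWZ Hxi) | exact (rho_pos W HW1 HWZ)]. }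
  pose proof (nab_frame xi W HW1 HWZ Hxi nab Hnab) as Hnabf.
  rewrite (Hnabf _ _ _ (koszul_13 xi c q Hw Hr Hx Hq)),
    (Hnabf _ _ _ (koszul_32 xi c q Hw Hr Hx Hq)), !fadd_frame.
  repeat split.
  - exact (Hnabf _ _ _ (koszul_11 xi c q Hw Hr Hx Hq)).
  - exact (Hnabf _ _ _ (koszul_12 xi c q Hw Hr Hx Hq)).
  - exact (Hnabf _ _ _ (koszul_21 xi c q Hw Hr Hx Hq)).
  - exact (Hnabf _ _ _ (koszul_22 xi c q Hw Hr Hx Hq)).
  - exact (Hnabf _ _ _ (koszul_31 xi c q Hw Hr Hx Hq)).
  - f_equal. apply fvec_eq; simpl; ring.
  - exact (Hnabf _ _ _ (koszul_23 xi c q Hw Hr Hx Hq)).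
  - f_equal. apply fvec_eq; simpl; ring.
  - exact (Hnabf _ _ _ (koszul_33 xi c q Hw Hr Hx Hq)).
Qed.
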